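(* Let $L\ge1$ and let $U\in\mathcal{U}$ satisfy $\operatorname{ind}(U)=0$ and $\operatorname{prop}(U)\le L$. Then there exist $V\in\mathrm{U}(B_0(2L))$ and $W\in\mathrm{U}(B_{-L}(2L))$ with $U=VW$.
   Context: Let $\ell^2(\mathbb{C})$ be the Hilbert space of square-summable complex sequences indexed by $\mathbb{Z}$, with standard orthonormal basis $\{e_i\}_{i\in\mathbb{Z}}$, and $\mathcal{B}$ the algebra of bounded operators on it. Each $T\in\mathcal{B}$ has matrix entries $T_{ij}=\langle e_i,Te_j\rangle$. The propagation is $\operatorname{prop}(T)=\sup\{|i-j|: T_{ij}\ne0\}$, and $\mathcal{U}$ denotes the set of unitary operators in $\mathcal{B}$ of finite propagation. The index of $U\in\mathcal{U}$ is $\operatorname{ind}(U)=\sum_{i<0,\,j\ge0}|U_{ij}|^2-\sum_{i\ge0,\,j<0}|U_{ij}|^2$ (a finite sum). For $k\in\mathbb{Z}$ and $M\ge1$, $B_k(M)=\{T\in\mathcal{B}: T_{ij}=0 \text{ unless } k+nM\le i,j<k+(n+1)M\text{ for some }n\in\mathbb{Z}\}$ is the algebra of block-diagonal operators with blocks of size $M$ starting at $k$, and $\mathrm{U}(B_k(M))$ is its group of unitary elements. *)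

From HB Require Import structures.
From mathcomp Require Import all_boot all_order all_algebra.
From mathcomp Require Import complex.
From mathcomp Require Import reals.
Set Implicit Arguments. Unset Strict Implicit. Unset Printing Implicit Defensive.
Import Order.TTheory GRing.Theory Num.Theory.
Local Open Scope ring_scope.
Local Open Scope complex_scope.

(* Complex numbers C = R[i] over the real numbers R : realType.
   An (infinite) matrix indexed by Z x Z: T i j = <e_i, T e_j>. *)
Definition mx (R : realType) := int -> int -> R[i].

Section Defs.
Variable R : realType.

Definition prop_le (T : mx R) (N : nat) : Prop :=
  forall i j : int, (N < `|i - j|)%N -> T i j = 0.

Definition adj (T : mx R) : mx R := fun i j => (T j i)^*.

Definition idmx : mx R := fun i j => (i == j)%:R.

(* Matrix product (A B)_{ij} = \sum_k A_{ik} B_{kj}, written for A with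
   prop(A) <= N, in which case only k with |i - k| <= N contribute. *)
Definition mulmx_band (N : nat) (A B : mx R) : mx R :=
  fun i j => \sum_(t < (N + N).+1) A i (i - N%:Z + t%:Z) * B (i - N%:Z + t%:Z) j.

Definition unitary_fp (T : mx R) : Prop :=
  exists N : nat, prop_le T N /\
    mulmx_band N (adj T) T = idmx /\ mulmx_band N T (adj T) = idmx.

(* ind(U) = \sum_{i<0, j>=0} |U_ij|^2 - \sum_{i>=0, j<0} |U_ij|^2, written
   for U with prop(U) <= N: only -N <= i < 0 <= j < N (resp. symmetrically)
   contribute. *)
Definition index_band (N : nat) (U : mx R) : R[i] :=
  \sum_(a < N) \sum_(b < N) `|U (- (a.+1)%:Z) b%:Z| ^+ 2
  - \sum_(a < N) \sum_(b < N) `|U a%:Z (- (b.+1)%:Z)| ^+ 2.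

Definition block_diag (k : int) (M : nat) (T : mx R) : Prop :=
  forall i j : int, T i j != 0 ->
    exists n : int,
      [/\ k + n * M%:Z <= i, i < k + (n + 1) * M%:Z,
          k + n * M%:Z <= j & j < k + (n + 1) * M%:Z].

End Defs.

From HB Require Import structures.
From mathcomp Require Import all_boot all_order all_algebra.
From mathcomp Require Import complex reals zify.
From Stdlib Require Import FunctionalExtensionality.
Import Order.TTheory GRing.Theory Num.Theory Num.Def.
Local Open Scope ring_scope.

(* Cut the rows of U into blocks of height 2L starting at the multiples o of
   2L.  As prop(U) <= L, the rows of the block at o live in the 4L columns from
   o - L on; call P_o and N_o the left and right halves of this row block.
   Unitarity of U gives P_o^* N_o = 0, P_o P_o^* + N_o N_o^* = 1 and
   P_o^* P_o + N_(o-2L)^* N_(o-2L) = 1.  The last two identities make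
   tr(P_o P_o^* ) independent of o, and for o = 0 the vanishing of the index
   shows that it is L.  Hence P_o has rank L, and Gram-Schmidt bases of the
   row space of P_o^* and of its orthogonal complement form a unitary Q_o
   whose first L rows annihilate N_o and whose last L rows annihilate P_o.
   The block diagonal V with blocks Q_o^* lies in U(B_0(2L)), and the rows of
   W = V^* U coming from the first (resp. last) L rows of the block at o are
   supported in the columns [o - L, o + L) (resp. [o + L, o + 3L)), so that W
   lies in U(B_(-L)(2L)). *)

Section IntervalSum.
Context {V : nmodType}.
Implicit Types (a : int) (F : int -> V).

Definition zsum a (n : nat) F := \sum_(t < n) F (a + t%:Z).

Lemma zsum_cat a n1 n2 F :
  zsum a (n1 + n2) F = zsum a n1 F + zsum (a + n1%:Z) n2 F.
Proof.
rewrite /zsum big_split_ord /=; congr (_ + _); apply: eq_bigr => t _.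
by rewrite PoszD addrA.
Qed.

Lemma zsum1 a F : zsum a 1 F = F a.
Proof. by rewrite /zsum big_ord1 addr0. Qed.

Lemma zsum_eq0 a n F : (forall t, (t < n)%N -> F (a + t%:Z) = 0) -> zsum a n F = 0.
Proof. by move=> F0; rewrite /zsum big1 // => t _; apply: F0. Qed.

Lemma zsum_widen a n a' n' F :
  a' <= a -> a + n%:Z <= a' + n'%:Z ->
  (forall k, a' <= k -> k < a' + n'%:Z -> F k != 0 -> (a <= k) && (k < a + n%:Z)) ->
  zsum a n F = zsum a' n' F.
Proof.
move=> le_a'a le_end suppF.
have F0 k : a' <= k -> k < a' + n'%:Z -> ~~ ((a <= k) && (k < a + n%:Z)) -> F k = 0.
  by move=> k1 k2 kout; apply/eqP; apply: contraNT kout; apply: suppF.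
set d := `|a - a'|%N; set e := (n' - d - n)%N.
have -> : n' = (d + n + e)%N by rewrite /e /d; lia.
rewrite !zsum_cat (@zsum_eq0 _ d) ?(@zsum_eq0 _ e) ?add0r ?addr0.
- by have -> : a' + d%:Z = a by rewrite /d; lia.
- by move=> t lt_te; apply: F0; [lia | lia | apply/negP => /andP[]; lia].
- by move=> t lt_td; apply: F0; [lia | lia | apply/negP => /andP[]; lia].
Qed.

Lemma eq_zsum_supp a n a' n' F :
  (forall k, F k != 0 -> [&& a <= k, k < a + n%:Z, a' <= k & k < a' + n'%:Z]) ->
  zsum a n F = zsum a' n' F.
Proof.
move=> suppF; pose d := `|a - a'|%N.
transitivity (zsum (a - d%:Z) (d + d + n + n') F); last symmetry.
  by apply: zsum_widen => [||k _ _ /suppF /and4P[]]; rewrite /d; lia.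
by apply: zsum_widen => [||k _ _ /suppF /and4P[]]; rewrite /d; lia.
Qed.

Lemma zsum_rev (n : nat) F : zsum (- n%:Z) n F = \sum_(t < n) F (- (t.+1)%:Z).
Proof.
rewrite /zsum (reindex_inj rev_ord_inj) /=; apply: eq_bigr => t _; congr F.
by have := ltn_ord t; lia.
Qed.

End IntervalSum.

Lemma mulf_neq0_factors (R : idomainType) (x y : R) : x * y != 0 -> x != 0 /\ y != 0.
Proof. by rewrite mulf_eq0 negb_or => /andP. Qed.

Section BandMatrices.
Context {R : realType}.
Implicit Types (A B D U : mx R) (i j k : int).
Local Notation idmx := (@idmx R).

Lemma mx_ext A B : (forall i j, A i j = B i j) -> A = B.
Proof.
by move=> eqAB; apply: functional_extensionality => i;
  apply: functional_extensionality => j; apply: eqAB.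
Qed.

Lemma prop_le_supp {A N i j} : prop_le A N -> A i j != 0 -> (`|i - j| <= N)%N.
Proof. by move=> propA; apply: contraNT; rewrite -ltnNge => /propA ->. Qed.

Lemma mulmx_bandE N A B i j :
  mulmx_band N A B i j = zsum (i - N%:Z) (N + N).+1 (fun k => A i k * B k j).
Proof. by []. Qed.

Lemma eq_mulmx_band N N' A B : prop_le A N -> prop_le A N' ->
  mulmx_band N A B = mulmx_band N' A B.
Proof.
move=> propN propN'; apply: mx_ext => i j; rewrite !mulmx_bandE.
apply: eq_zsum_supp => k /mulf_neq0_factors[Aik _].
have := prop_le_supp propN Aik; have := prop_le_supp propN' Aik.
by move=> ? ?; apply/and4P; split; lia.
Qed.

Lemma prop_le_mulmx_band a b A B : prop_le A a -> prop_le B b ->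
  prop_le (mulmx_band a A B) (a + b).
Proof.
move=> propA propB i j ltij; rewrite /mulmx_band big1 // => t _.
set k := i - a%:Z + t%:Z.
have [/eqP Aik|/(prop_le_supp propA) ?] := boolP (A i k == 0); first by rewrite Aik mul0r.
have [/eqP Bkj|/(prop_le_supp propB) ?] := boolP (B k j == 0); first by rewrite Bkj mulr0.
by move: ltij; rewrite /k; lia.
Qed.

Lemma mulmx_bandA a b A B D : prop_le B b ->
  mulmx_band (a + b) (mulmx_band a A B) D = mulmx_band a A (mulmx_band b B D).
Proof.
move=> propB; apply: mx_ext => i j.
have BD_wide (s : 'I_(a + a).+1) :
  mulmx_band b B D (i - a%:Z + s%:Z) j =
  zsum (i - (a + b)%:Z) (a + b + (a + b)).+1 (fun k => B (i - a%:Z + s%:Z) k * D k j).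
  rewrite mulmx_bandE; apply: eq_zsum_supp => k.
  move=> /mulf_neq0_factors[/(prop_le_supp propB) ? _].
  by have := ltn_ord s; move=> ?; apply/and4P; split; lia.
rewrite [RHS]/mulmx_band (eq_bigr _ (fun s _ => congr1 _ (BD_wide s))).
under eq_bigr => s _ do rewrite /zsum mulr_sumr.
rewrite exchange_big /mulmx_band; apply: eq_bigr => t _.
by rewrite mulr_suml; apply: eq_bigr => s _; rewrite mulrA.
Qed.

Lemma mul1mx_band N B : mulmx_band N idmx B = B.
Proof.
apply: mx_ext => i j; rewrite mulmx_bandE.
rewrite (@eq_zsum_supp _ _ _ i 1) ?zsum1 /idmx ?eqxx ?mul1r // => k.
by move=> /mulf_neq0_factors[]; rewrite pnatr_eq0 eqb0 negbK => /eqP <- _; lia.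
Qed.

Lemma prop_le_adj {A N} : prop_le A N -> prop_le (adj A) N.
Proof. by move=> propA i j ltij; rewrite /adj propA ?conjc0 //; lia. Qed.

Lemma adjK A : adj (adj A) = A.
Proof. by apply: mx_ext => i j; rewrite /adj conjcK. Qed.

Lemma adj_mulmx_band {a b A B} : prop_le A a -> prop_le B b ->
  adj (mulmx_band a A B) = mulmx_band b (adj B) (adj A).
Proof.
move=> propA propB; apply: mx_ext => i j; rewrite /adj mulmx_bandE.
transitivity (zsum (j - a%:Z) (a + a).+1 (fun k => (B k i)^* * (A j k)^*)).
  by rewrite /mulmx_band rmorph_sum; apply: eq_bigr => t _; rewrite rmorphM mulrC.
apply: eq_zsum_supp => k /mulf_neq0_factors[].
rewrite !conjc_eq0 => /(prop_le_supp propB) ? /(prop_le_supp propA) ?.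
by apply/and4P; split; lia.
Qed.

Definition band_unitary N U :=
  mulmx_band N (adj U) U = idmx /\ mulmx_band N U (adj U) = idmx.

Lemma band_unitary_prop_le {N U} : unitary_fp U -> prop_le U N -> band_unitary N U.
Proof.
move=> [N0 [propN0 [UU UU']]] propN.
have [propN0' propN'] := (prop_le_adj propN0, prop_le_adj propN).
by split; rewrite (@eq_mulmx_band N N0).
Qed.

Lemma band_unitary_adj {N U} : band_unitary N U -> band_unitary N (adj U).
Proof. by rewrite /band_unitary adjK => -[]. Qed.

Lemma unitary_fp_mulmx_band {a b A B} : prop_le A a -> prop_le B b ->
  band_unitary a A -> band_unitary b B -> unitary_fp (mulmx_band a A B).
Proof.
move=> propA propB [AA AA'] [BB BB']; exists (a + b)%N.
split; first exact: prop_le_mulmx_band.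
rewrite (adj_mulmx_band propA propB); split.
- rewrite addnC (mulmx_bandA b a _ _ _ (prop_le_adj propA)) -(mulmx_bandA a _ _ _ _ propA).
  by rewrite AA mul1mx_band.
- rewrite (mulmx_bandA a b _ _ _ propB) -(mulmx_bandA b _ _ _ _ (prop_le_adj propB)).
  by rewrite BB' mul1mx_band.
Qed.

End BandMatrices.

Lemma castmx_mulmxE (R : pzSemiRingType) m1 m2 n p (e : m1 = m2)
    (A : 'M[R]_(m1, n)) (Y : 'M[R]_(n, p)) i j :
  (castmx (e, erefl n) A *m Y) i j = (A *m Y) (cast_ord (esym e) i) j.
Proof. by rewrite !mxE; apply: eq_bigr => k _; rewrite castmxE cast_ord_id. Qed.

Lemma castmx_unitary (C : numClosedFieldType) m1 m2 n (e : m1 = m2)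
    (A : 'M[C]_(m1, n)) :
  A \is unitarymx -> castmx (e, erefl n) A \is unitarymx.
Proof. by case: m2 / e; rewrite castmx_id. Qed.

Section UnitarySplitting.
Context {C : numClosedFieldType}.
Local Open Scope sesquilinear_scope.
Local Notation "B ^!" :=
  (orthomx conjC (mx_of_hermitian (hermitian1mx _)) B) : matrix_set_scope.
Context {n : nat}.
Implicit Types (P N Q : 'M[C]_n) (i j : 'I_n).

(* Its first [\rank P] rows are an orthonormal basis of the row space of
   [P ^t*], the other ones an orthonormal basis of its orthogonal complement. *)
Definition schmidt_split P : 'M[C]_n :=
  castmx (add_rank_ortho (P ^t*), erefl n) (schmidt_complete (P ^t*)).

Lemma schmidt_split_unitary P : schmidt_split P \is unitarymx.
Proof. exact/castmx_unitary/schmidt_complete_unitarymx. Qed.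

Lemma schmidt_split_orth P N i j : P ^t* *m N = 0 -> (i < \rank P)%N ->
  (schmidt_split P *m N) i j = 0.
Proof.
move=> PN0 ltir; rewrite castmx_mulmxE.
have ltir' : (i < \rank (P^t*))%N by rewrite mxrank_map mxrank_tr.
have -> : cast_ord (esym (add_rank_ortho (P^t*))) i = lshift _ (Ordinal ltir').
  by apply: val_inj.
rewrite mul_col_mx col_mxEu.
have /submxP[D ->] : (schmidt (row_base (P^t*)) <= P^t*)%MS.
  by rewrite (eqmx_schmidt_free (row_base_free _)) eq_row_base.
by rewrite -mulmxA PN0 mulmx0 mxE.
Qed.

Lemma schmidt_split_mul P i j : (\rank P <= i)%N -> (schmidt_split P *m P) i j = 0.
Proof.
move=> leri; rewrite castmx_mulmxE.
have rP : \rank (P^t*) = \rank P by rewrite mxrank_map mxrank_tr.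
have ltir' : (i - \rank (P^t*) < \rank (P^t*)^!%MS)%N.
  by have := ltn_ord i; rewrite -{2}(add_rank_ortho (P^t*)) rP; lia.
have -> : cast_ord (esym (add_rank_ortho (P^t*))) i = rshift _ (Ordinal ltir').
  by apply: val_inj => /=; rewrite rP subnKC.
rewrite mul_col_mx col_mxEd.
have /orthomx1P : (schmidt (row_base (P^t*)^!%MS) <= (P^t*)^!)%MS.
  by rewrite (eqmx_schmidt_free (row_base_free _)) eq_row_base.
by rewrite trmxCK => ->; rewrite mxE.
Qed.

Lemma mxtrace_gram_split r Q P N : (r <= n)%N -> Q \is unitarymx ->
  P *m P ^t* + N *m N ^t* = 1%:M ->
  (forall i j, (i < r)%N -> (Q *m N) i j = 0) ->
  (forall i j, (r <= i)%N -> (Q *m P) i j = 0) ->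
  \tr (P *m P ^t*) = r%:R.
Proof.
move=> lern Qu PPNN QN0 QP0.
have gramQ (Y : 'M[C]_n) : (Q *m Y) *m (Q *m Y) ^t* = Q *m (Y *m Y ^t*) *m Q ^t*.
  by rewrite trmx_mul map_mxM !mulmxA.
have QtQ : Q ^t* *m Q = 1%:M.
  by move: Qu; rewrite -trmxC_unitary => /unitarymxP; rewrite trmxCK.
have gram_diag i : ((Q *m P) *m (Q *m P) ^t*) i i = (i < r)%N%:R.
  have [ltir|leri] := ltnP i r; last first.
    by rewrite mxE big1 // => k _; rewrite QP0 // mul0r.
  have QNi : ((Q *m N) *m (Q *m N) ^t*) i i = 0.
    by rewrite mxE big1 // => k _; rewrite QN0 // mul0r.
  have := congr1 (fun Y => (Q *m Y *m Q ^t*) i i) PPNN.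
  rewrite /= mulmxDr mulmxDl -!gramQ mulmx1 (unitarymxP Qu) [LHS]mxE QNi addr0 => ->.
  by rewrite mxE eqxx.
have -> : \tr (P *m P ^t*) = \tr ((Q *m P) *m (Q *m P) ^t*).
  by symmetry; rewrite gramQ mxtrace_mulC !mulmxA QtQ mul1mx.
transitivity (\sum_(i < r) (1 : C)); last by rewrite sumr_const card_ord.
rewrite /mxtrace [RHS](big_ord_widen _ (fun=> 1) lern) [RHS]big_mkcond.
apply: eq_bigr => i _.
by rewrite gram_diag; case: (i < r)%N.
Qed.

Lemma schmidt_split_rows r P N :
  P ^t* *m N = 0 -> P *m P ^t* + N *m N ^t* = 1%:M -> \tr (P *m P ^t*) = r%:R ->
  [/\ schmidt_split P \is unitarymx,
      forall i j, (i < r)%N -> (schmidt_split P *m N) i j = 0 &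
      forall i j, (r <= i)%N -> (schmidt_split P *m P) i j = 0].
Proof.
move=> PN0 PPNN trr.
have : \tr (P *m P ^t*) = (\rank P)%:R.
  apply: mxtrace_gram_split (schmidt_split_unitary P) PPNN _ _.
  - exact: rank_leq_col.
  - by move=> i j; apply: schmidt_split_orth.
  - by move=> i j; apply: schmidt_split_mul.
rewrite trr => /eqP; rewrite eqr_nat => /eqP ->; split.
- exact: schmidt_split_unitary.
- by move=> i j; apply: schmidt_split_orth.
- by move=> i j; apply: schmidt_split_mul.
Qed.

End UnitarySplitting.

Definition mx_entry {R : nmodType} {m n} (A : 'M[R]_(m, n)) (a b : nat) : R :=
  if insub a is Some i then if insub b is Some j then A i j else 0 else 0.

Lemma mx_entryE (R : nmodType) m n (A : 'M[R]_(m, n)) (i : 'I_m) (j : 'I_n) :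
  mx_entry A i j = A i j.
Proof. by rewrite /mx_entry !valK. Qed.

Section BlockDiagonal.
Context {R : realType}.
Local Notation C := (R[i]).
Local Notation idmx := (@idmx R).
Variable d : nat.
Hypothesis d_gt0 : (0 < d)%N.
Implicit Types (q : int) (A B : int -> 'M[C]_d).

Lemma divz_blk q (a : 'I_d) : ((d%:Z * q + a%:Z) %/ d%:Z)%Z = q.
Proof.
rewrite mulrC divzMDl; last by apply/eqP; lia.
by rewrite divz_small ?addr0 //; have := ltn_ord a; lia.
Qed.

Lemma blk_decomp (i : int) : exists q (a : 'I_d), i = d%:Z * q + a%:Z.
Proof.
have [d_gt0' d_neq0] : 0 < d%:Z /\ d%:Z != 0 by split; lia.
have := modz_ge0 i d_neq0; have := ltz_pmod i d_gt0' => lt_mod ge0_mod.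
have lt_mod' : (`|(i %% d%:Z)%Z| < d)%N by lia.
exists (i %/ d%:Z)%Z, (Ordinal lt_mod') => /=.
by have := divz_eq i d%:Z; lia.
Qed.

Lemma blk_mx_ext (X Y : mx R) :
  (forall q q' (a b : 'I_d), X (d%:Z * q + a%:Z) (d%:Z * q' + b%:Z) =
                             Y (d%:Z * q + a%:Z) (d%:Z * q' + b%:Z)) ->
  X = Y.
Proof.
move=> eqXY; apply: mx_ext => i j.
by have [q [a ->]] := blk_decomp i; have [q' [b ->]] := blk_decomp j.
Qed.

Definition blkdiag B : mx R := fun i j =>
  if (i %/ d%:Z)%Z == (j %/ d%:Z)%Z then
    mx_entry (B (i %/ d%:Z)%Z) `|(i %% d%:Z)%Z| `|(j %% d%:Z)%Z|
  else 0.

Lemma blkdiagE B q (a b : 'I_d) :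
  blkdiag B (d%:Z * q + a%:Z) (d%:Z * q + b%:Z) = B q a b.
Proof.
rewrite /blkdiag !divz_blk eqxx mulrC !modzMDl !modz_small ?mx_entryE //.
  by have := ltn_ord b; lia.
by have := ltn_ord a; lia.
Qed.

Lemma blkdiag_off B q q' (a b : 'I_d) : q != q' ->
  blkdiag B (d%:Z * q + a%:Z) (d%:Z * q' + b%:Z) = 0.
Proof. by rewrite /blkdiag !divz_blk => /negPf ->. Qed.

Lemma blkdiag_supp B i j : blkdiag B i j != 0 -> (i %/ d%:Z)%Z = (j %/ d%:Z)%Z.
Proof. by rewrite /blkdiag; case: ifP => [/eqP //|_]; rewrite eqxx. Qed.

Lemma prop_le_blkdiag B : prop_le (blkdiag B) d.
Proof.
move=> i j lt_dij; apply/eqP; apply: contraTT lt_dij => /blkdiag_supp; rewrite -leqNgt.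
have [q [a ->]] := blk_decomp i; have [q' [b ->]] := blk_decomp j.
by rewrite !divz_blk => <-; have := ltn_ord a; have := ltn_ord b; lia.
Qed.

Lemma block_diag_blkdiag B : block_diag 0 d (blkdiag B).
Proof.
move=> i j /blkdiag_supp eq_ij.
have [q [a eq_i]] := blk_decomp i; have [q' [b eq_j]] := blk_decomp j.
move: eq_ij; rewrite eq_i eq_j !divz_blk => <-; exists q.
by have := ltn_ord a; have := ltn_ord b; split; lia.
Qed.

Lemma mulmx_band_blkdiagl A (Y : mx R) q (a : 'I_d) j :
  mulmx_band d (blkdiag A) Y (d%:Z * q + a%:Z) j =
  \sum_(t < d) A q a t * Y (d%:Z * q + t%:Z) j.
Proof.
rewrite mulmx_bandE (@eq_zsum_supp _ _ _ (d%:Z * q) d).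
  by apply: eq_bigr => t _; rewrite blkdiagE.
move=> k /mulf_neq0_factors[/blkdiag_supp + _]; rewrite divz_blk.
have [q' [b ->]] := blk_decomp k; rewrite divz_blk => <-.
by have := ltn_ord a; have := ltn_ord b; move=> ? ?; apply/and4P; split; lia.
Qed.

Lemma mulmx_band_blkdiag A B :
  mulmx_band d (blkdiag A) (blkdiag B) = blkdiag (fun q => A q *m B q).
Proof.
apply: blk_mx_ext => q q' a b; rewrite mulmx_band_blkdiagl.
have [<-|neq_qq'] := eqVneq q q'.
  by rewrite blkdiagE mxE; apply: eq_bigr => t _; rewrite blkdiagE.
by rewrite blkdiag_off // big1 // => t _; rewrite blkdiag_off ?mulr0.
Qed.

Lemma adj_blkdiag B : adj (blkdiag B) = blkdiag (fun q => (B q)^t*)%sesqui.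
Proof.
apply: blk_mx_ext => q q' a b; rewrite /adj.
have [<-|neq_qq'] := eqVneq q q'; first by rewrite !blkdiagE !mxE.
by rewrite !blkdiag_off ?conjc0 // eq_sym.
Qed.

Lemma blkdiag1 : blkdiag (fun=> 1%:M) = idmx.
Proof.
apply: blk_mx_ext => q q' a b; rewrite /idmx.
have [<-|neq_qq'] := eqVneq q q'.
  by rewrite blkdiagE mxE (inj_eq (addrI _)) eqz_nat.
rewrite blkdiag_off //; case: eqP => // eq_ij; move: neq_qq'.
by rewrite -(divz_blk q a) eq_ij divz_blk eqxx.
Qed.

Lemma band_unitary_blkdiag B : (forall q, B q \is unitarymx) ->
  band_unitary d (blkdiag B).
Proof.
move=> Bu; rewrite /band_unitary adj_blkdiag !mulmx_band_blkdiag -blkdiag1.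
split; congr blkdiag; apply: functional_extensionality => q.
  by rewrite -[_ ^t*%sesqui]mul1mx (mulmxKtV _ (Bu q)).
exact/unitarymxP.
Qed.

End BlockDiagonal.

Lemma int_step_const {T : Type} {f : int -> T} :
  (forall n, f n = f (n - 1)) -> forall n, f n = f 0.
Proof.
move=> f_step; elim/int_rect => [//|k IHk|k IHk].
  by rewrite f_step -IHk; congr f; lia.
by rewrite -IHk [RHS]f_step; congr f; lia.
Qed.

Lemma norm_sqr_neq0 (R : numDomainType) (x : R) : `|x| ^+ 2 != 0 -> x != 0.
Proof. by rewrite sqrf_eq0 normr_eq0. Qed.

Section UnitaryBlocks.
Context {R : realType}.
Local Notation C := (R[i]).
Variables (L : nat) (U : mx R).
Hypothesis propU : prop_le U L.
Hypothesis unitU : band_unitary L U.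
Local Notation M := (L + L)%N.

Definition left_block (o : int) : 'M[C]_M := \matrix_(a, b) U (o + a%:Z) (o - L%:Z + b%:Z).

Definition right_block (o : int) : 'M[C]_M := \matrix_(a, b) U (o + a%:Z) (o + L%:Z + b%:Z).

Local Open Scope sesquilinear_scope.

Lemma left_right_block_orth o : (left_block o)^t* *m right_block o = 0.
Proof.
have [UtU _] := unitU.
apply/matrixP => b b'; rewrite !mxE.
transitivity (mulmx_band L (adj U) U (o - L%:Z + b%:Z) (o + L%:Z + b'%:Z)).
  rewrite mulmx_bandE (@eq_zsum_supp _ _ _ o M).
    by apply: eq_bigr => a _; rewrite !mxE.
  move=> k /mulf_neq0_factors[]; rewrite conjc_eq0.
  move=> /(prop_le_supp propU) ? /(prop_le_supp propU) ?.
  by have := ltn_ord b; have := ltn_ord b'; move=> ? ?; apply/and4P; split; lia.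
by rewrite UtU /idmx; case: eqP => //; have := ltn_ord b; lia.
Qed.

Lemma block_rows_orthonormal o :
  left_block o *m (left_block o)^t* + right_block o *m (right_block o)^t* = 1%:M.
Proof.
have [_ UUt] := unitU.
apply/matrixP => a a'; rewrite !mxE.
transitivity (mulmx_band L U (adj U) (o + a%:Z) (o + a'%:Z)).
  rewrite mulmx_bandE (@eq_zsum_supp _ _ _ (o - L%:Z) (M + M)).
    rewrite zsum_cat; congr (_ + _); apply: eq_bigr => b _; rewrite !mxE //.
    by have -> : o - L%:Z + M%:Z + b%:Z = o + L%:Z + b%:Z by lia.
  move=> k /mulf_neq0_factors[/(prop_le_supp propU) ? _].
  by have := ltn_ord a; move=> ?; apply/and4P; split; lia.
by rewrite UUt /idmx (inj_eq (addrI _)) eqz_nat.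
Qed.

Lemma block_cols_orthonormal o :
  (left_block o)^t* *m left_block o + (right_block (o - M%:Z))^t* *m right_block (o - M%:Z)
  = 1%:M.
Proof.
have [UtU _] := unitU.
apply/matrixP => b b'; rewrite !mxE.
transitivity (mulmx_band L (adj U) U (o - L%:Z + b%:Z) (o - L%:Z + b'%:Z)).
  rewrite mulmx_bandE (@eq_zsum_supp _ _ _ (o - M%:Z) (M + M)).
    rewrite zsum_cat addrC; congr (_ + _); apply: eq_bigr => a _; rewrite !mxE.
      by have -> : o - M%:Z + L%:Z = o - L%:Z by lia.
    by have -> : o - M%:Z + M%:Z = o by lia.
  move=> k /mulf_neq0_factors[]; rewrite conjc_eq0 => /(prop_le_supp propU) ? _.
  by have := ltn_ord b; move=> ?; apply/and4P; split; lia.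
by rewrite UtU /idmx (inj_eq (addrI _)) eqz_nat.
Qed.

Lemma left_gram_trace_const n :
  \tr (left_block (M%:Z * n) *m (left_block (M%:Z * n))^t*) =
  \tr (left_block 0 *m (left_block 0)^t*).
Proof.
pose f m := \tr (left_block (M%:Z * m) *m (left_block (M%:Z * m))^t*).
suff f_step m : f m = f (m - 1) by have := int_step_const f_step n; rewrite /f mulr0.
rewrite /f mulrBr mulr1.
have rows := congr1 mxtrace (block_rows_orthonormal (M%:Z * m - M%:Z)).
have cols := congr1 mxtrace (block_cols_orthonormal (M%:Z * m)).
rewrite mxtraceD in rows.
rewrite mxtraceD mxtrace_mulC [X in _ + X = _]mxtrace_mulC in cols.
apply: (addIr (\tr (right_block (M%:Z * m - M%:Z) *m (right_block (M%:Z * m - M%:Z))^t*))).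
by rewrite cols rows.
Qed.

Definition col_mass (a : int) (n : nat) (j : int) : C := zsum a n (fun k => `|U k j| ^+ 2).

Lemma col_mass_unit j : col_mass (j - L%:Z) (L + L).+1 j = 1.
Proof.
have [UtU _] := unitU.
transitivity (mulmx_band L (adj U) U j j); last by rewrite UtU /idmx eqxx.
by apply: eq_bigr => t _; rewrite normCKC.
Qed.

Lemma col_mass_unit_split j : 0 <= j < L%:Z -> col_mass 0 M j = 1 - col_mass (- L%:Z) L j.
Proof.
move=> j_bounds; rewrite -(col_mass_unit j).
have -> : col_mass (j - L%:Z) (L + L).+1 j = col_mass (- L%:Z) (L + M) j.
  apply: eq_zsum_supp => k /norm_sqr_neq0 /(prop_le_supp propU) ?.
  by apply/and4P; split; lia.
by rewrite /col_mass [in RHS]zsum_cat addNr [RHS]addrC addKr.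
Qed.

Lemma gram_trace0 :
  \tr (left_block 0 *m (left_block 0)^t*) = zsum (- L%:Z) M (col_mass 0 M).
Proof.
rewrite mxtrace_mulC; apply: eq_bigr => b _; rewrite mxE; apply: eq_bigr => a _.
by rewrite !mxE normCKC !add0r.
Qed.

Lemma gram_trace0_index : index_band L U = 0 ->
  \tr (left_block 0 *m (left_block 0)^t*) = L%:R.
Proof.
rewrite /index_band => /eqP; rewrite subr_eq0 => /eqP index0.
rewrite gram_trace0 zsum_cat addNr.
(* The columns -L..-1 meet the rows 0..2L-1 only above row L, and the columns
   0..L-1 miss only the rows -L..-1 of their unit mass. *)
have -> : zsum (- L%:Z) L (col_mass 0 M) =
    \sum_(a < L) \sum_(b < L) `|U a%:Z (- (b.+1)%:Z)| ^+ 2.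
  rewrite zsum_rev [RHS]exchange_big; apply: eq_bigr => b _ /=.
  transitivity (zsum 0 L (fun k => `|U k (- (b.+1)%:Z)| ^+ 2)).
    symmetry; apply: zsum_widen => [||k ? ? /norm_sqr_neq0 /(prop_le_supp propU) ?]; lia.
  by apply: eq_bigr => a _; rewrite add0r.
have -> : zsum 0 L (col_mass 0 M) =
    L%:R - \sum_(a < L) \sum_(b < L) `|U (- (a.+1)%:Z) b%:Z| ^+ 2.
  transitivity (\sum_(b < L) (1 - col_mass (- L%:Z) L b%:Z)).
    by apply: eq_bigr => b _; rewrite add0r col_mass_unit_split //; have := ltn_ord b; lia.
  rewrite sumrB sumr_const card_ord; congr (_ - _).
  by rewrite [RHS]exchange_big; apply: eq_bigr => b _; rewrite /col_mass zsum_rev.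
by rewrite index0 addrC subrK.
Qed.

End UnitaryBlocks.

Section Factorisation.
Context {R : realType}.
Local Notation C := (R[i]).
Variables (L : nat) (U : mx R).
Hypotheses (L_gt0 : (0 < L)%N) (propU : prop_le U L) (unitU : band_unitary L U).
Hypothesis indexU : index_band L U = 0.
Local Notation M := (L + L)%N.
Local Open Scope sesquilinear_scope.

Let M_gt0 : (0 < M)%N. Proof. by rewrite addn_gt0 L_gt0. Qed.

Definition block_rotation (q : int) : 'M[C]_M :=
  schmidt_split (left_block L U (M%:Z * q)).

Lemma block_rotation_split q :
  [/\ block_rotation q \is unitarymx,
      forall i j : 'I_M, (i < L)%N ->
        (block_rotation q *m right_block L U (M%:Z * q)) i j = 0 &
      forall i j : 'I_M, (L <= i)%N ->
        (block_rotation q *m left_block L U (M%:Z * q)) i j = 0].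
Proof.
apply: schmidt_split_rows.
- exact: left_right_block_orth.
- exact: block_rows_orthonormal.
- by rewrite left_gram_trace_const // gram_trace0_index.
Qed.

Definition Vfactor : mx R := blkdiag M (fun q => (block_rotation q)^t*).

Definition Wfactor : mx R := mulmx_band M (adj Vfactor) U.

Lemma prop_le_Vfactor : prop_le Vfactor M.
Proof. exact: prop_le_blkdiag. Qed.

Lemma adj_Vfactor : adj Vfactor = blkdiag M block_rotation.
Proof.
rewrite adj_blkdiag //; congr blkdiag.
by apply: functional_extensionality => q; rewrite trmxCK.
Qed.

Lemma band_unitary_Vfactor : band_unitary M Vfactor.
Proof.
apply: band_unitary_blkdiag => // q.
by rewrite trmxC_unitary; case: (block_rotation_split q).
Qed.

Lemma Wfactor_entry q (a : 'I_M) c :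
  Wfactor (M%:Z * q + a%:Z) c = \sum_(t < M) block_rotation q a t * U (M%:Z * q + t%:Z) c.
Proof. by rewrite /Wfactor adj_Vfactor mulmx_band_blkdiagl. Qed.

Lemma Wfactor_far q (a : 'I_M) c : (c < M%:Z * q - L%:Z) || (M%:Z * q + M%:Z + L%:Z <= c) ->
  Wfactor (M%:Z * q + a%:Z) c = 0.
Proof.
move=> c_far; rewrite Wfactor_entry big1 // => t _.
by rewrite propU ?mulr0 //; have := ltn_ord t; lia.
Qed.

Lemma Wfactor_left q (a s : 'I_M) :
  Wfactor (M%:Z * q + a%:Z) (M%:Z * q - L%:Z + s%:Z) =
  (block_rotation q *m left_block L U (M%:Z * q)) a s.
Proof. by rewrite Wfactor_entry mxE; apply: eq_bigr => t _; rewrite mxE. Qed.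

Lemma Wfactor_right q (a s : 'I_M) :
  Wfactor (M%:Z * q + a%:Z) (M%:Z * q + L%:Z + s%:Z) =
  (block_rotation q *m right_block L U (M%:Z * q)) a s.
Proof. by rewrite Wfactor_entry mxE; apply: eq_bigr => t _; rewrite mxE. Qed.

Lemma Wfactor_supp q (a : 'I_M) c : Wfactor (M%:Z * q + a%:Z) c != 0 ->
  if (a < L)%N then M%:Z * q - L%:Z <= c < M%:Z * q + L%:Z
  else M%:Z * q + L%:Z <= c < M%:Z * q + M%:Z + L%:Z.
Proof.
have [_ QN0 QP0] := block_rotation_split q.
have [c_far|c_near] := boolP ((c < M%:Z * q - L%:Z) || (M%:Z * q + M%:Z + L%:Z <= c)).
  by rewrite Wfactor_far ?eqxx.
move=> Wnz; case: ltnP => a_L; apply/negPn/negP => c_out; move/eqP: Wnz; apply.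
- have s_lt : (`|(c - (M%:Z * q + L%:Z))%R| < M)%N by lia.
  have -> : c = M%:Z * q + L%:Z + (Ordinal s_lt)%:Z by rewrite /=; lia.
  by rewrite Wfactor_right QN0.
- have s_lt : (`|(c - (M%:Z * q - L%:Z))%R| < M)%N by lia.
  have -> : c = M%:Z * q - L%:Z + (Ordinal s_lt)%:Z by rewrite /=; lia.
  by rewrite Wfactor_left QP0.
Qed.

Lemma block_diag_Wfactor : block_diag (- L%:Z) M Wfactor.
Proof.
move=> r c; have [q [a ->]] := blk_decomp _ M_gt0 r => /Wfactor_supp.
have := ltn_ord a; case: (ltnP a L) => a_L a_M /= c_bounds.
  by exists q; split; lia.
by exists (q + 1); split; lia.
Qed.

Lemma mulmx_band_Vfactor_Wfactor : mulmx_band M Vfactor Wfactor = U.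
Proof.
have [_ VVt] := band_unitary_Vfactor.
by rewrite /Wfactor -(mulmx_bandA _ _ _ _ _ (prop_le_adj prop_le_Vfactor)) VVt mul1mx_band.
Qed.

Lemma unitary_block_factorisation :
  exists V W : mx R,
    [/\ block_diag 0 M V /\ unitary_fp V,
        block_diag (- L%:Z) M W /\ unitary_fp W &
        U = mulmx_band M V W].
Proof.
exists Vfactor, Wfactor; split; last by rewrite mulmx_band_Vfactor_Wfactor.
- split; first exact: block_diag_blkdiag.
  by exists M; split; [exact: prop_le_Vfactor | exact: band_unitary_Vfactor].
- split; first exact: block_diag_Wfactor.
  exact: unitary_fp_mulmx_band (prop_le_adj prop_le_Vfactor) propU
    (band_unitary_adj band_unitary_Vfactor) unitU.
Qed.

End Factorisation.

Theorem theorem2p8 (R : realType) (L : nat) (U : mx R) :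
  (1 <= L)%N ->
  unitary_fp U -> prop_le U L -> index_band L U = 0 ->
  exists V W : mx R,
    [/\ block_diag 0 (2 * L) V /\ unitary_fp V,
        block_diag (- L%:Z) (2 * L) W /\ unitary_fp W &
        U = mulmx_band (2 * L) V W].
Proof.
move=> L_gt0 unitU propU indexU; rewrite mul2n -addnn.
exact: unitary_block_factorisation (band_unitary_prop_le unitU propU) indexU.
Qed.
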